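(* Let $\mathcal C$ be a cocomplete category and $I$ a class of morphisms in $\mathcal C$. Then $\Phi(I)\text{-cof}_{\mathrm{reg}}\subseteq \Phi(I\text{-cof}_{\mathrm{reg}})$.
   Context: For a class $I$ of morphisms, $I\text{-cof}_{\mathrm{reg}}$ is the class of all transfinite compositions of base changes (pushouts) of morphisms from $I$. For a class $I$ of morphisms, $\Phi(I)$ is the class of all morphisms $f:A\to B$ in $\mathcal C$ for which there exists a morphism $h:B\to C$ such that $h\in I$ and $h\circ f\in I$. *)

Set Implicit Arguments.
Set Universe Polymorphism.

Record Category@{o h} := {
  Obj : Type@{o};
  Hom : Obj -> Obj -> Type@{h};
  idm : forall A, Hom A A;
  comp : forall A B C, Hom B C -> Hom A B -> Hom A C;
  comp_id_l : forall A B (f : Hom A B), comp (idm B) f = f;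
  comp_id_r : forall A B (f : Hom A B), comp f (idm A) = f;
  comp_assoc : forall A B C D (f : Hom A B) (g : Hom B C) (k : Hom C D),
      comp k (comp g f) = comp (comp k g) f
}.
Arguments idm {C} A : rename.
Arguments comp {C A B D} _ _ : rename.
Arguments Hom {_} _ _.
Arguments Obj : clear implicits.

Record Functor@{jo jh o h} (J : Category@{jo jh}) (C : Category@{o h}) := {
  fobj : Obj J -> Obj C;
  fmap : forall a b, Hom a b -> Hom (fobj a) (fobj b);
  fmap_id : forall a, fmap a a (idm a) = idm (fobj a);
  fmap_comp : forall a b c (u : Hom a b) (v : Hom b c),
      fmap a c (comp v u) = comp (fmap b c v) (fmap a b u)
}.
Arguments fobj {J C} _ _.
Arguments fmap {J C} _ {a b} _.

Definition HasColimit@{jo jh o h} {J : Category@{jo jh}} {C : Category@{o h}}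
    (F : Functor J C) : Prop :=
  exists (L : Obj C) (leg : forall j, Hom (fobj F j) L),
    (forall a b (u : Hom a b), comp (leg b) (fmap F u) = leg a) /\
    (forall (E : Obj C) (c : forall j, Hom (fobj F j) E),
        (forall a b (u : Hom a b), comp (c b) (fmap F u) = c a) ->
        exists w : Hom L E, (forall j, comp w (leg j) = c j) /\
          (forall w' : Hom L E, (forall j, comp w' (leg j) = c j) -> w' = w)).

Definition Cocomplete@{s o h} (C : Category@{o h}) : Prop :=
  forall (J : Category@{s s}) (F : Functor J C), HasColimit F.

Definition MorClass@{o h} (C : Category@{o h}) :=
  forall A B : Obj C, Hom A B -> Prop.

(* Pushout square:      f
                    A ------> B
                  g |         | g'
                    v         v
                    Y ------> D
                        f'
   f' is the base change (pushout) of f along g. *)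
Definition IsPushout@{o h} {C : Category@{o h}} {A B Y D : Obj C}
    (f : Hom A B) (g : Hom A Y) (f' : Hom Y D) (g' : Hom B D) : Prop :=
  comp g' f = comp f' g /\
  forall (E : Obj C) (u : Hom B E) (v : Hom Y E), comp u f = comp v g ->
    exists w : Hom D E, (comp w g' = u /\ comp w f' = v) /\
      (forall w' : Hom D E, comp w' g' = u /\ comp w' f' = v -> w' = w).

Definition BaseChanges@{o h} {C : Category@{o h}} (I : MorClass C) : MorClass C :=
  fun Y D f' => exists (A B : Obj C) (f : Hom A B) (g : Hom A Y) (g' : Hom B D),
    I A B f /\ IsPushout f g f' g'.

(* Well-ordered index sets with a least and a greatest element, i.e. ordinals
   of the form lambda+1 = {0,...,lambda} (small: universe level [s]). *)
Record WellOrderTop@{s} := {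
  W : Type@{s};
  lt : W -> W -> Prop;
  lt_irrefl : forall a, ~ lt a a;
  lt_trans : forall a b c, lt a b -> lt b c -> lt a c;
  lt_total : forall a b, lt a b \/ a = b \/ lt b a;
  lt_wf : well_founded lt;
  bot : W;
  top : W;
  bot_least : forall a, lt bot a \/ bot = a;
  top_greatest : forall a, lt a top \/ a = top
}.
Arguments lt {_} _ _.
Arguments bot {_}.
Arguments top {_}.

Definition le@{s} {O : WellOrderTop@{s}} (a b : W O) : Prop := lt a b \/ a = b.

Lemma bot_le_top@{s} (O : WellOrderTop@{s}) : le (@bot O) (@top O).
Proof.
  destruct (bot_least O top) as [H|H]; [left|right]; exact H.
Qed.

Definition IsSucc@{s} {O : WellOrderTop@{s}} (a s : W O) : Prop :=
  lt a s /\ forall c, ~ (lt a c /\ lt c s).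

Definition IsLimit@{s} {O : WellOrderTop@{s}} (b : W O) : Prop :=
  b <> bot /\ forall a, lt a b -> exists c, lt a c /\ lt c b.

(* A lambda-sequence X : {0,...,lambda} -> C, i.e. a functor from the ordinal
   (as a poset category), continuous at limit elements, whose successor maps
   X_a -> X_{a+1} lie in K. *)
Record Chain@{s o h} (C : Category@{o h}) (K : MorClass C) (O : WellOrderTop@{s}) := {
  X : W O -> Obj C;
  xm : forall a b, le a b -> Hom (X a) (X b);
  xm_irr : forall a b (H H' : le a b), xm H = xm H';
  xm_id : forall a (H : le a a), xm H = idm (X a);
  xm_comp : forall a b c (Hab : le a b) (Hbc : le b c) (Hac : le a c),
      comp (xm Hbc) (xm Hab) = xm Hac;
  xm_succ : forall a s (Hs : IsSucc a s) (H : le a s), K _ _ (xm H);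
  xm_cont : forall b, IsLimit b ->
    forall (E : Obj C) (u : forall a, lt a b -> Hom (X a) E),
      (forall a a' (Ha : lt a b) (Ha' : lt a' b) (H : le a a'),
          comp (u a' Ha') (xm H) = u a Ha) ->
      exists w : Hom (X b) E,
        (forall a (Ha : lt a b) (H : le a b), comp w (xm H) = u a Ha) /\
        (forall w' : Hom (X b) E,
           (forall a (Ha : lt a b) (H : le a b), comp w' (xm H) = u a Ha) -> w' = w)
}.
Arguments X {C K O} _ _.
Arguments xm {C K O} _ {a b} _.

Definition castHom@{o h} {C : Category@{o h}} {A A' B B' : Obj C}
    (e0 : A = A') (e1 : B = B') (f : Hom A B) : Hom A' B' :=
  match e0 in _ = A1, e1 in _ = B1 return Hom A1 B1 with
  | eq_refl, eq_refl => f end.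

(* Transfinite compositions of morphisms of K: the composite X_0 -> X_lambda
   (= colim_{a<lambda} X_a when lambda is a limit) of a lambda-sequence. *)
Definition TransfiniteComp@{s o h} {C : Category@{o h}} (K : MorClass C) : MorClass C :=
  fun A B h => exists (O : WellOrderTop@{s}) (ch : Chain K O)
    (e0 : X ch bot = A) (e1 : X ch top = B),
    h = castHom e0 e1 (xm ch (bot_le_top O)).

Definition cof_reg@{s o h} {C : Category@{o h}} (I : MorClass C) : MorClass C :=
  TransfiniteComp@{s o h} (BaseChanges I).

Definition Phi@{o h} {C : Category@{o h}} (I : MorClass C) : MorClass C :=
  fun A B f => exists (Y : Obj C) (k : Hom B Y), I B Y k /\ I A Y (comp k f).

(* Let X be a lambda-sequence whose steps X_a -> X_(a+1) are pushouts of maps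
   f_a : A_a -> B_a, each with some k_a : B_a -> Y_a such that k_a and k_a f_a
   lie in I.  Let G(x, a) be X_x with every k_b for b < a, b + 1 <= x, pushed
   out along B_b -> X_(b+1) -> X_x.  Then a |-> G(top, a) is a transfinite
   composite of pushouts of the k_a, from X_top to G(top, top), and a |-> G(a, a)
   is one of pushouts of the k_a f_a (paste the pushout square of f_a with that
   of k_a), from X_bot to G(top, top) and equal to the former composed with
   X_bot -> X_top. *)

From Stdlib Require Import Classical ClassicalEpsilon.
Set Universe Polymorphism.

Section WellOrder.
Universe s.
Context {O : WellOrderTop@{s}}.
Implicit Types a b c l n : W O.

Lemma lt_asym {a b} : lt a b -> ~ lt b a.
Proof. intros H1 H2. exact (lt_irrefl O a (lt_trans O _ _ _ H1 H2)). Qed.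

Lemma not_lt_bot {a} : ~ lt a bot.
Proof.
  intro H. destruct (bot_least O a) as [H'|<-].
  - exact (lt_asym H H').
  - exact (lt_irrefl O _ H).
Qed.

Lemma le_refl a : le a a.
Proof. now right. Qed.

Lemma lt_le_incl {a b} : lt a b -> le a b.
Proof. now left. Qed.

Lemma le_trans {a b c} : le a b -> le b c -> le a c.
Proof.
  intros [H1|<-] [H2|<-]; try (now left); try (now right).
  left; exact (lt_trans O _ _ _ H1 H2).
Qed.

Lemma lt_le_trans {a b c} : lt a b -> le b c -> lt a c.
Proof. intros H1 [H2|<-]; [exact (lt_trans O _ _ _ H1 H2)|exact H1]. Qed.

Lemma bot_le a : le bot a.
Proof. exact (bot_least O a). Qed.

Lemma le_top a : le a top.
Proof. exact (top_greatest O a). Qed.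

Lemma succ_exists {a} : lt a top -> exists n, IsSucc a n.
Proof.
  intro Ha. apply NNPP. intro Hnone.
  assert (Habove : forall c, ~ lt a c).
  { intro c. induction c as [c IH] using (well_founded_ind (lt_wf O)).
    intro Hac. apply Hnone. exists c. split; [exact Hac|].
    intros d [H1 H2]. exact (IH d H2 H1). }
  exact (Habove _ Ha).
Qed.

(* The junk value [osucc a = a] when [a] has no successor (i.e. [a = top])
   keeps [le a (osucc a)] true everywhere. *)
Definition osucc a : W O :=
  match excluded_middle_informative (exists n, IsSucc a n) with
  | left H => proj1_sig (constructive_indefinite_description _ H)
  | right _ => a
  end.

Lemma osucc_spec {a} : lt a top -> IsSucc a (osucc a).
Proof.
  intro Ha. unfold osucc. destruct (excluded_middle_informative _) as [H|H].
  - exact (proj2_sig (constructive_indefinite_description _ H)).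
  - exfalso; exact (H (succ_exists Ha)).
Qed.

Lemma le_osucc a : le a (osucc a).
Proof.
  unfold osucc. destruct (excluded_middle_informative _) as [H|H].
  - left. exact (proj1 (proj2_sig (constructive_indefinite_description _ H))).
  - apply le_refl.
Qed.

Lemma osucc_le {a c} : lt a c -> le (osucc a) c.
Proof.
  intro H. pose proof (osucc_spec (lt_le_trans H (le_top c))) as [_ Hs].
  destruct (lt_total O (osucc a) c) as [H1|[H1|H1]]; [now left|now right|].
  exfalso. exact (Hs c (conj H H1)).
Qed.

Lemma IsSucc_osucc {a n} : IsSucc a n -> n = osucc a.
Proof.
  intros [Han Hn]. pose proof (osucc_spec (lt_le_trans Han (le_top n))) as [Has _].
  destruct (osucc_le Han) as [H|H]; [|now symmetry].
  exfalso. exact (Hn _ (conj Has H)).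
Qed.

Lemma lt_IsSucc_cases {a n b} : IsSucc a n -> lt b n -> lt b a \/ b = a.
Proof.
  intros [H1 H2] Hb. destruct (lt_total O b a) as [H|[H|H]]; auto.
  exfalso; exact (H2 b (conj H Hb)).
Qed.

Lemma bot_lt_limit {l} : IsLimit l -> lt bot l.
Proof. intros [Hb _]. destruct (bot_least O l) as [H|H]; [exact H|congruence]. Qed.

Lemma osucc_lt_limit {l c} : IsLimit l -> lt c l -> lt (osucc c) l.
Proof.
  intros [_ Hl] Hc. destruct (osucc_le Hc) as [H|H]; [exact H|].
  destruct (Hl c Hc) as [d Hd].
  pose proof (osucc_spec (lt_le_trans Hc (le_top l))) as [_ Hs].
  rewrite H in Hs. exfalso; exact (Hs d Hd).
Qed.

End WellOrder.

Section Pushouts.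
Universes o h.
Context {C : Category@{o h}}.

Lemma pushout_intro {A B Y D : Obj C} (f : Hom A B) (g : Hom A Y) (f' : Hom Y D) (g' : Hom B D) :
  comp g' f = comp f' g ->
  (forall E (u : Hom B E) (v : Hom Y E), comp u f = comp v g ->
     exists w : Hom D E, comp w g' = u /\ comp w f' = v) ->
  (forall E (w1 w2 : Hom D E), comp w1 g' = comp w2 g' -> comp w1 f' = comp w2 f' -> w1 = w2) ->
  IsPushout f g f' g'.
Proof.
  intros Hsq Hex Hext. split; [exact Hsq|].
  intros E u v Huv. destruct (Hex E u v Huv) as [w [Hw1 Hw2]].
  exists w. split; [now split|]. intros w' [H1 H2]. apply Hext; congruence.
Qed.

Lemma pushout_ext {A B Y D : Obj C} {f : Hom A B} {g : Hom A Y} {f' : Hom Y D} {g' : Hom B D} :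
  IsPushout f g f' g' ->
  forall E (w1 w2 : Hom D E), comp w1 g' = comp w2 g' -> comp w1 f' = comp w2 f' -> w1 = w2.
Proof.
  intros [Hsq Hup] E w1 w2 Hg Hf.
  destruct (Hup E (comp w2 g') (comp w2 f')) as [w [_ Hw]].
  { now rewrite <- !comp_assoc, Hsq. }
  rewrite (Hw w1), (Hw w2); auto.
Qed.

Lemma pushout_paste {A B Y X X' X'' : Obj C} (f : Hom A B) (k : Hom B Y) (g : Hom A X)
    (m1 : Hom X X') (g1 : Hom B X') (m2 : Hom X' X'') (g2 : Hom Y X'') :
  IsPushout f g m1 g1 -> IsPushout k g1 m2 g2 -> IsPushout (comp k f) g (comp m2 m1) g2.
Proof.
  intros Hpo1 Hpo2. apply pushout_intro.
  - now rewrite comp_assoc, (proj1 Hpo2), <- !comp_assoc, (proj1 Hpo1).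
  - intros E u v Huv.
    destruct (proj2 Hpo1 E (comp u k) v) as [w1 [[Hw1g Hw1m] _]].
    { now rewrite <- comp_assoc. }
    destruct (proj2 Hpo2 E u w1) as [w [[Hwg Hwm] _]].
    { now rewrite Hw1g. }
    exists w. split; [exact Hwg|]. now rewrite comp_assoc, Hwm.
  - intros E w1 w2 Hg Hm. apply (pushout_ext Hpo2); [exact Hg|].
    apply (pushout_ext Hpo1).
    + now rewrite <- !comp_assoc, <- !(proj1 Hpo2), !comp_assoc, Hg.
    + now rewrite <- !comp_assoc.
Qed.

Lemma castHom_sym {P P' Q : Obj C} (e : P' = P) (m : Hom P Q) :
  castHom (eq_sym e) eq_refl m = comp m (castHom eq_refl e (idm P')).
Proof. destruct e. simpl. now rewrite comp_id_r. Qed.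

(* [v] extended by [u] at the extra index [a]; [H] is only needed to transport
   [u] along [b = a]. *)
Definition hom_extend {T : Type} (Q : T -> Prop) (a : T) (F : T -> Obj C) (E : Obj C)
    (v : forall b, Q b -> Hom (F b) E) (u : Hom (F a) E) (b : T) (H : Q b \/ b = a) :
    Hom (F b) E :=
  match excluded_middle_informative (Q b) with
  | left Hq => v b Hq
  | right Hn => match or_ind (fun q => False_ind (a = b) (Hn q)) (@eq_sym _ b a) H
                  in _ = b' return Hom (F b') E with eq_refl => u end
  end.

Lemma hom_extend_old {T : Type} Q (a : T) F E v u b H (Hq : Q b) :
  hom_extend Q a F E v u b H = v b Hq.
Proof.
  unfold hom_extend. destruct (excluded_middle_informative (Q b)) as [H'|H'].
  - f_equal; apply proof_irrelevance.
  - contradiction.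
Qed.

Lemma hom_extend_new {T : Type} Q (a : T) F E v u H :
  ~ Q a -> hom_extend Q a F E v u a H = u.
Proof.
  intro Hn. unfold hom_extend. destruct (excluded_middle_informative (Q a)) as [H'|H'].
  - contradiction.
  - generalize (or_ind (fun q : Q a => False_ind (a = a) (H' q)) (@eq_sym _ a a) H).
    intro e. now rewrite (proof_irrelevance _ e eq_refl).
Qed.

End Pushouts.

(* The shape of a wide pushout: a centre, and for each [t : T] a span
   [centre <- source t -> target t]. *)
Inductive SpanShape@{u} (T : Type@{u}) : Type@{u} :=
  | centre | source (t : T) | target (t : T).
Arguments centre {T}. Arguments source {T} t. Arguments target {T} t.

Definition shape_arrow@{u} {T : Type@{u}} (i j : SpanShape T) : Prop :=
  match i, j with
  | centre, centre => True
  | source _, centre => True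
  | source t, source t' | source t, target t' | target t, target t' => t = t'
  | _, _ => False
  end.

Definition shape_id@{u} {T : Type@{u}} (i : SpanShape T) : shape_arrow i i :=
  match i with centre => I | source _ | target _ => eq_refl end.

Lemma shape_trans@{u} {T : Type@{u}} (i j k : SpanShape T) :
  shape_arrow i j -> shape_arrow j k -> shape_arrow i k.
Proof. destruct i, j, k; simpl; intros; subst; auto; contradiction. Qed.

Definition shape_category@{u} (T : Type@{u}) : Category@{u u}.
Proof.
  refine {| Obj := SpanShape T; Hom := @shape_arrow T; idm := @shape_id T;
            comp := fun i j k g f => shape_trans i j k f g |};
    intros; apply proof_irrelevance.
Defined.

Section WidePushout.
Universes s o h.
Context {C : Category@{o h}} {T : Type@{s}}.
Variables (Xs : Obj C) (Bf Yf : T -> Obj C).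
Variables (mX : forall t, Hom (Bf t) Xs) (mY : forall t, Hom (Bf t) (Yf t)).

Definition WideCocone (E : Obj C) (u : Hom Xs E) (v : forall t, Hom (Yf t) E) : Prop :=
  forall t, comp u (mX t) = comp (v t) (mY t).

Definition IsWidePushout (L : Obj C) (iu : Hom Xs L) (iv : forall t, Hom (Yf t) L) : Prop :=
  WideCocone L iu iv /\
  forall E u v, WideCocone E u v ->
    exists w : Hom L E, (comp w iu = u /\ forall t, comp w (iv t) = v t) /\
      forall w', (comp w' iu = u /\ forall t, comp w' (iv t) = v t) -> w' = w.

Lemma wide_pushout_intro {L iu iv} : IsWidePushout L iu iv ->
  forall E u v, WideCocone E u v ->
    exists w : Hom L E, comp w iu = u /\ forall t, comp w (iv t) = v t.
Proof. intros [_ Hup] E u v Hv. destruct (Hup E u v Hv) as [w [Hw _]]. now exists w. Qed.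

Lemma wide_pushout_ext {L iu iv} : IsWidePushout L iu iv ->
  forall E (w1 w2 : Hom L E), comp w1 iu = comp w2 iu ->
    (forall t, comp w1 (iv t) = comp w2 (iv t)) -> w1 = w2.
Proof.
  intros [Hc Hup] E w1 w2 Hu Hv.
  destruct (Hup E (comp w2 iu) (fun t => comp w2 (iv t))) as [w [_ Hw]].
  { intro t. now rewrite <- !comp_assoc, Hc. }
  rewrite (Hw w1), (Hw w2); auto.
Qed.

Lemma wide_pushout_empty (HT : T -> False) :
  IsWidePushout Xs (idm Xs) (fun t => False_rect _ (HT t)).
Proof.
  split; [intro t; destruct (HT t)|].
  intros E u v _. exists u. split.
  - split; [apply comp_id_r | intro t; destruct (HT t)].
  - intros w' [Hw' _]. now rewrite comp_id_r in Hw'.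
Qed.

Definition shape_obj (j : SpanShape T) : Obj C :=
  match j with centre => Xs | source t => Bf t | target t => Yf t end.

Definition shape_map (i j : SpanShape T) : shape_arrow i j -> Hom (shape_obj i) (shape_obj j) :=
  match i as i0, j as j0 return shape_arrow i0 j0 -> Hom (shape_obj i0) (shape_obj j0) with
  | centre, centre => fun _ => idm Xs
  | source t, centre => fun _ => mX t
  | source t, source _ => fun e => match e in _ = t1 return Hom (Bf t) (Bf t1) with
                                   eq_refl => idm _ end
  | source t, target _ => fun e => match e in _ = t1 return Hom (Bf t) (Yf t1) with
                                   eq_refl => mY t end
  | target t, target _ => fun e => match e in _ = t1 return Hom (Yf t) (Yf t1) with
                                   eq_refl => idm _ end
  | centre, source _ | centre, target _ | target _, centre | target _, source _ =>
      fun p => False_rect _ p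
  end.

Lemma shape_map_comp (a b c : SpanShape T) (u : shape_arrow a b) (v : shape_arrow b c) :
  shape_map a c (shape_trans a b c u v) = comp (shape_map b c v) (shape_map a b u).
Proof.
  destruct a, b, c; simpl in u, v |- *; try contradiction; try subst;
  try (match goal with |- context [shape_trans ?a ?b ?c ?x ?y] =>
         generalize (shape_trans a b c x y) end; simpl; intro p;
       try rewrite (proof_irrelevance _ p eq_refl));
  simpl; now rewrite ?comp_id_l, ?comp_id_r.
Qed.

Definition shape_diagram : Functor@{s s o h} (shape_category T) C.
Proof.
  refine {| fobj := (shape_obj : Obj (shape_category T) -> Obj C); fmap := shape_map |}.
  - now intros [].
  - apply shape_map_comp.
Defined.

Lemma wide_pushout_exists (HC : Cocomplete@{s o h} C) :
  exists L iu iv, IsWidePushout L iu iv.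
Proof.
  destruct (HC (shape_category T) shape_diagram) as [L [leg [Hleg Hup]]].
  assert (Hsrc : forall t, comp (leg centre) (mX t) = leg (source t))
    by exact (fun t => Hleg (source t) centre I).
  exists L, (leg centre), (fun t => leg (target t)). split.
  - intro t. rewrite Hsrc. symmetry. exact (Hleg (source t) (target t) eq_refl).
  - intros E u v Hv.
    set (c := fun j : SpanShape T => match j return Hom (shape_obj j) E with
                | centre => u | source t => comp u (mX t) | target t => v t end).
    destruct (Hup E c) as [w [Hw Hw_uniq]].
    { intros [|t|t] [|t'|t'] p; simpl in p |- *; try contradiction; try subst;
        simpl; rewrite ?comp_id_r; auto. }
    exists w. split; [split; [exact (Hw centre) | exact (fun t => Hw (target t))]|].
    intros w' [H1 H2]. apply Hw_uniq. intros [|t|t]; simpl; auto.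
    rewrite <- Hsrc, comp_assoc. exact (f_equal (fun m => comp m (mX t)) H1).
Qed.

End WidePushout.

Section Construction.
Universes s o h.
Variable C : Category@{o h}.
Hypothesis HC : Cocomplete@{s o h} C.
Variable I : MorClass@{o h} C.
Variable O : WellOrderTop@{s}.
Variable ch : Chain@{s o h} (BaseChanges (Phi I)) O.

Notation Xc := (X ch).
Notation xc := (xm ch).

Lemma xc_comp_assoc {a b c : W O} (H1 : le b c) (H2 : le a b) (H3 : le a c) {E}
    (f : Hom E (Xc a)) :
  comp (xc H1) (comp (xc H2) f) = comp (xc H3) f.
Proof. now rewrite comp_assoc, (xm_comp ch H2 H1 H3). Qed.

Lemma xc_limit_ext {l} (Hl : IsLimit l) E (w1 w2 : Hom (Xc l) E) :
  (forall a (Ha : lt a l), comp w1 (xc (lt_le_incl Ha)) = comp w2 (xc (lt_le_incl Ha))) ->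
  w1 = w2.
Proof.
  intro Hw.
  destruct (xm_cont ch Hl E (fun a Ha => comp w2 (xc (lt_le_incl Ha)))) as [w [_ Huniq]].
  { intros a a' Ha Ha' H. simpl.
    now rewrite <- comp_assoc, (xm_comp ch H (lt_le_incl Ha') (lt_le_incl Ha)). }
  rewrite (Huniq w1), (Huniq w2); [reflexivity| |];
    intros a Ha H; rewrite (xm_irr ch H (lt_le_incl Ha)); auto.
Qed.

Record SuccWitness (b : W O) := {
  sw_A : Obj C; sw_B : Obj C; sw_Y : Obj C;
  sw_f : Hom sw_A sw_B; sw_k : Hom sw_B sw_Y;
  sw_g : Hom sw_A (Xc b); sw_g' : Hom sw_B (Xc (osucc b)) }.
Arguments sw_A {b}. Arguments sw_B {b}. Arguments sw_Y {b}. Arguments sw_f {b}.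
Arguments sw_k {b}. Arguments sw_g {b}. Arguments sw_g' {b}.

Definition IsSuccWitness {b} (d : SuccWitness b) : Prop :=
  I _ _ (sw_k d) /\ I _ _ (comp (sw_k d) (sw_f d)) /\
  forall H : le b (osucc b), IsPushout (sw_f d) (sw_g d) (xc H) (sw_g' d).

Lemma succ_witness_exists b : lt b top -> exists d : SuccWitness b, IsSuccWitness d.
Proof.
  intro Hb. pose proof (osucc_spec Hb) as Hs. pose proof (lt_le_incl (proj1 Hs)) as H.
  destruct (xm_succ ch Hs H) as [A [B [f [g [g' [[Y [k [Hk Hkf]]] Hpo]]]]]].
  exists {| sw_A := A; sw_B := B; sw_Y := Y; sw_f := f; sw_k := k; sw_g := g; sw_g' := g' |}.
  split; [exact Hk|split; [exact Hkf|]]. intro H'. simpl. now rewrite (xm_irr ch H' H).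
Qed.

Definition trivial_witness b : SuccWitness b :=
  {| sw_A := Xc b; sw_B := Xc b; sw_Y := Xc b; sw_f := idm _; sw_k := idm _;
     sw_g := idm _; sw_g' := xc (le_osucc b) |}.

Definition wit b : SuccWitness b := epsilon (inhabits (trivial_witness b)) IsSuccWitness.

Lemma wit_spec b : lt b top -> IsSuccWitness (wit b).
Proof. intro Hb. exact (epsilon_spec _ _ (succ_witness_exists b Hb)). Qed.

Notation Bw b := (sw_B (wit b)).
Notation Yw b := (sw_Y (wit b)).
Notation kw b := (sw_k (wit b)).
Notation gw b := (sw_g' (wit b)).

(* [Glue x a] is G(x, a), and [attached x a b] says that k_b is pushed out in it. *)
Definition attached (x a b : W O) : Prop := lt b a /\ le (osucc b) x.

Lemma attached_mono {x a x' a' b} : le x x' -> le a a' -> attached x a b -> attached x' a' b.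
Proof. intros Hx Ha [H1 H2]. split; [exact (lt_le_trans H1 Ha)|exact (le_trans H2 Hx)]. Qed.

Lemma attached_below {x a b} : le a x -> lt b a -> attached x a b.
Proof. intros Hax Hb. split; [exact Hb|exact (le_trans (osucc_le Hb) Hax)]. Qed.

Lemma attached_osucc {x a} : lt a top -> le (osucc a) x -> attached x (osucc a) a.
Proof. intros Ha Hx. split; [exact (proj1 (osucc_spec Ha))|exact Hx]. Qed.

Lemma attached_lt_top {x a b} : attached x a b -> lt b top.
Proof. intros [Hb _]. exact (lt_le_trans Hb (le_top a)). Qed.

Definition glue_leg x a (t : {b | attached x a b}) : Hom (Bw (proj1_sig t)) (Xc x) :=
  comp (xc (proj2 (proj2_sig t))) (gw (proj1_sig t)).

Definition IsGlue x a :=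
  IsWidePushout (Xc x) (fun t => Bw (proj1_sig t)) (fun t => Yw (proj1_sig t))
    (glue_leg x a) (fun t => kw (proj1_sig t)).

Record GlueData (x a : W O) := {
  gd_obj : Obj C;
  gd_inc : Hom (Xc x) gd_obj;
  gd_att : forall t : {b | attached x a b}, Hom (Yw (proj1_sig t)) gd_obj }.
Arguments gd_obj {x a}. Arguments gd_inc {x a}. Arguments gd_att {x a}.

(* For [a = bot] nothing is attached, and the glued object is chosen to be
   [X_x] itself on the nose: chains must start exactly at [X_bot] and [X_top]. *)
Lemma glue_data_exists x a : exists d : GlueData x a,
  IsGlue x a (gd_obj d) (gd_inc d) (gd_att d) /\
  (a = bot -> exists e : Xc x = gd_obj d, gd_inc d = castHom eq_refl e (idm (Xc x))).
Proof.
  destruct (classic (a = bot)) as [->|Ha].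
  - pose (Hempty := fun t : {b | attached x bot b} => not_lt_bot (proj1 (proj2_sig t))).
    exists {| gd_obj := Xc x; gd_inc := idm _; gd_att := fun t => False_rect _ (Hempty t) |}.
    split; [apply wide_pushout_empty|]. intros _. now exists eq_refl.
  - destruct (wide_pushout_exists (Xc x) (fun t => Bw (proj1_sig t)) (fun t => Yw (proj1_sig t))
      (glue_leg x a) (fun t => kw (proj1_sig t)) HC) as [L [iu [iv HL]]].
    exists {| gd_obj := L; gd_inc := iu; gd_att := iv |}. split; [exact HL|contradiction].
Qed.

Definition glue_data x a : GlueData x a :=
  proj1_sig (constructive_indefinite_description _ (glue_data_exists x a)).
Definition Glue x a : Obj C := gd_obj (glue_data x a).
Definition inc x a : Hom (Xc x) (Glue x a) := gd_inc (glue_data x a).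
Definition att x a b (Hb : attached x a b) : Hom (Yw b) (Glue x a) :=
  gd_att (glue_data x a) (exist _ b Hb).

Lemma glue_spec x a : IsGlue x a (Glue x a) (inc x a) (gd_att (glue_data x a)).
Proof.
  exact (proj1 (proj2_sig (constructive_indefinite_description _ (glue_data_exists x a)))).
Qed.

Lemma Glue_bot x : exists e : Xc x = Glue x bot, inc x bot = castHom eq_refl e (idm (Xc x)).
Proof.
  exact (proj2 (proj2_sig (constructive_indefinite_description _ (glue_data_exists x bot)))
    eq_refl).
Qed.

Lemma att_irr x a b H H' : att x a b H = att x a b H'.
Proof. f_equal; apply proof_irrelevance. Qed.

Lemma glue_cocone x a b (Hb : attached x a b) (H : le (osucc b) x) :
  comp (inc x a) (comp (xc H) (gw b)) = comp (att x a b Hb) (kw b).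
Proof. rewrite (xm_irr ch H (proj2 Hb)). exact (proj1 (glue_spec x a) (exist _ b Hb)). Qed.

Lemma glue_intro x a E (u : Hom (Xc x) E) (v : forall b, attached x a b -> Hom (Yw b) E) :
  (forall b Hb, comp u (comp (xc (proj2 Hb)) (gw b)) = comp (v b Hb) (kw b)) ->
  exists w : Hom (Glue x a) E, comp w (inc x a) = u /\ forall b Hb, comp w (att x a b Hb) = v b Hb.
Proof.
  intro Hv.
  destruct (wide_pushout_intro _ _ _ _ _ (glue_spec x a) E u (fun t => v _ (proj2_sig t)))
    as [w [Hw1 Hw2]].
  { intros [b Hb]. apply Hv. }
  exists w. split; [exact Hw1|]. intros b Hb. exact (Hw2 (exist _ b Hb)).
Qed.

Lemma glue_ext x a E (w1 w2 : Hom (Glue x a) E) :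
  comp w1 (inc x a) = comp w2 (inc x a) ->
  (forall b Hb, comp w1 (att x a b Hb) = comp w2 (att x a b Hb)) -> w1 = w2.
Proof.
  intros H1 H2. apply (wide_pushout_ext _ _ _ _ _ (glue_spec x a)); [exact H1|].
  intros [b Hb]. exact (H2 b Hb).
Qed.

Lemma glue_map_exists {x a x' a'} (Hx : le x x') (Ha : le a a') :
  exists w : Hom (Glue x a) (Glue x' a'), comp w (inc x a) = comp (inc x' a') (xc Hx) /\
    forall b Hb, comp w (att x a b Hb) = att x' a' b (attached_mono Hx Ha Hb).
Proof.
  apply glue_intro. intros b Hb.
  now rewrite <- comp_assoc, (xc_comp_assoc Hx (proj2 Hb) (le_trans (proj2 Hb) Hx)),
    (glue_cocone x' a' b (attached_mono Hx Ha Hb)).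
Qed.

Definition glue_map {x a x' a'} (Hx : le x x') (Ha : le a a') : Hom (Glue x a) (Glue x' a') :=
  proj1_sig (constructive_indefinite_description _ (glue_map_exists Hx Ha)).

Lemma glue_map_inc {x a x' a'} (Hx : le x x') (Ha : le a a') :
  comp (glue_map Hx Ha) (inc x a) = comp (inc x' a') (xc Hx).
Proof.
  exact (proj1 (proj2_sig (constructive_indefinite_description _ (glue_map_exists Hx Ha)))).
Qed.

Lemma glue_map_inc_refl {x a a'} (Hx : le x x) (Ha : le a a') :
  comp (glue_map Hx Ha) (inc x a) = inc x a'.
Proof. now rewrite glue_map_inc, xm_id, comp_id_r. Qed.

Lemma glue_map_att {x a x' a'} (Hx : le x x') (Ha : le a a') b Hb Hb' :
  comp (glue_map Hx Ha) (att x a b Hb) = att x' a' b Hb'.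
Proof.
  unfold glue_map.
  rewrite (proj2 (proj2_sig (constructive_indefinite_description _ (glue_map_exists Hx Ha))) b Hb).
  apply att_irr.
Qed.

Lemma glue_map_irr {x a x' a'} (Hx Hx' : le x x') (Ha Ha' : le a a') :
  glue_map Hx Ha = glue_map Hx' Ha'.
Proof. now rewrite (proof_irrelevance _ Hx Hx'), (proof_irrelevance _ Ha Ha'). Qed.

Lemma glue_map_id {x a} (Hx : le x x) (Ha : le a a) : glue_map Hx Ha = idm _.
Proof.
  apply glue_ext.
  - now rewrite glue_map_inc_refl, comp_id_l.
  - intros b Hb. now rewrite (glue_map_att _ _ _ _ Hb), comp_id_l.
Qed.

Lemma glue_map_comp {x a x' a' x'' a''} (H1x : le x x') (H1a : le a a') (H2x : le x' x'')
    (H2a : le a' a'') (H3x : le x x'') (H3a : le a a'') :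
  comp (glue_map H2x H2a) (glue_map H1x H1a) = glue_map H3x H3a.
Proof.
  apply glue_ext.
  - now rewrite <- comp_assoc, glue_map_inc, comp_assoc, glue_map_inc, <- comp_assoc,
      (xm_comp ch H1x H2x H3x), glue_map_inc.
  - intros b Hb. now rewrite <- comp_assoc, (glue_map_att _ _ _ _ (attached_mono H1x H1a Hb)),
      !(glue_map_att _ _ _ _ (attached_mono H3x H3a Hb)).
Qed.

Lemma glue_succ_pushout x a (Hx : le x x) (H : le a (osucc a)) (Pa : attached x (osucc a) a) :
  IsPushout (kw a) (comp (inc x a) (comp (xc (proj2 Pa)) (gw a)))
    (glue_map Hx H) (att x (osucc a) a Pa).
Proof.
  pose proof (osucc_spec (attached_lt_top Pa)) as Hs.
  assert (Hsplit : forall b, attached x (osucc a) b -> attached x a b \/ b = a).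
  { intros b [Hb1 Hb2]. destruct (lt_IsSucc_cases Hs Hb1) as [H1|H1];
      [left; now split|now right]. }
  assert (Hna : ~ attached x a a) by (intros [H1 _]; exact (lt_irrefl O a H1)).
  apply pushout_intro.
  - now rewrite comp_assoc, glue_map_inc_refl, (glue_cocone x (osucc a) a Pa).
  - intros E u v Huv.
    set (v' := fun b Hb => hom_extend (attached x a) a (fun b => Yw b) E
                 (fun b Hb => comp v (att x a b Hb)) u b (Hsplit b Hb)).
    destruct (glue_intro x (osucc a) E (comp v (inc x a)) v') as [w [Hw1 Hw2]].
    { intros b Hb. unfold v'. destruct (classic (attached x a b)) as [Hq|Hq].
      - now rewrite (hom_extend_old _ _ _ _ _ _ _ _ Hq), <- !comp_assoc, (glue_cocone x a b Hq).
      - destruct (Hsplit b Hb) as [Hq'|Hba]; [contradiction|subst b].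
        now rewrite hom_extend_new, Huv, <- comp_assoc, (xm_irr ch (proj2 Hb) (proj2 Pa)). }
    exists w. split.
    + unfold v' in Hw2. now rewrite Hw2, hom_extend_new.
    + apply glue_ext.
      * now rewrite <- comp_assoc, glue_map_inc_refl, Hw1.
      * intros b Hb. unfold v' in Hw2.
        now rewrite <- comp_assoc, (glue_map_att _ _ _ _ (attached_mono Hx H Hb)), Hw2,
          (hom_extend_old _ _ _ _ _ _ _ _ Hb).
  - intros E w1 w2 H1 H2. apply glue_ext.
    + now rewrite <- (glue_map_inc_refl Hx H), !comp_assoc, H2.
    + intros b Hb. destruct (Hsplit b Hb) as [Hq| ->].
      * now rewrite <- (glue_map_att Hx H b Hq Hb), !comp_assoc, H2.
      * now rewrite (att_irr _ _ _ Hb Pa).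
Qed.

(* G(a, a) -> G(a+1, a) attaches nothing new, so it is a pushout of f_a just
   like X_a -> X_(a+1). *)
Lemma glue_base_pushout a (Ha : lt a top) (H : le a (osucc a)) (Hr : le a a) :
  IsPushout (sw_f (wit a)) (comp (inc a a) (sw_g (wit a)))
    (glue_map H Hr) (comp (inc (osucc a) a) (gw a)).
Proof.
  pose proof (proj2 (proj2 (wit_spec a Ha)) H) as Hpo.
  assert (Hdiag : forall b, attached (osucc a) a b -> attached a a b)
    by exact (fun b Hb => attached_below (le_refl a) (proj1 Hb)).
  apply pushout_intro.
  - now rewrite <- comp_assoc, (proj1 Hpo), !comp_assoc, glue_map_inc.
  - intros E u v Huv.
    destruct (proj2 Hpo E u (comp v (inc a a))) as [w0 [[Hw0g Hw0x] _]].
    { now rewrite <- comp_assoc. }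
    destruct (glue_intro (osucc a) a E w0 (fun b Hb => comp v (att a a b (Hdiag b Hb))))
      as [w [Hw1 Hw2]].
    { intros b Hb.
      now rewrite <- (xc_comp_assoc H (proj2 (Hdiag b Hb)) (proj2 Hb)), comp_assoc, Hw0x,
        <- !comp_assoc, (glue_cocone a a b (Hdiag b Hb)). }
    exists w. split.
    + now rewrite comp_assoc, Hw1.
    + apply glue_ext.
      * now rewrite <- comp_assoc, glue_map_inc, comp_assoc, Hw1.
      * intros b Hb.
        now rewrite <- comp_assoc, (glue_map_att H Hr b Hb (attached_mono H Hr Hb)), Hw2,
          (att_irr a a b _ Hb).
  - intros E w1 w2 Hg Hm. apply glue_ext.
    + apply (pushout_ext Hpo).
      * now rewrite <- !comp_assoc.
      * now rewrite <- !comp_assoc, <- (glue_map_inc H Hr), !comp_assoc, Hm.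
    + intros b Hb. now rewrite <- (glue_map_att H Hr b (Hdiag b Hb) Hb), !comp_assoc, Hm.
Qed.

Lemma top_glue_succ a (Ha : lt a top) (H : le a (osucc a)) :
  BaseChanges I (Glue top a) (Glue top (osucc a)) (glue_map (le_refl top) H).
Proof.
  pose (Pa := attached_osucc Ha (le_top (osucc a))).
  exists _, _, (kw a), (comp (inc top a) (comp (xc (proj2 Pa)) (gw a))),
    (att top (osucc a) a Pa). split.
  - exact (proj1 (wit_spec a Ha)).
  - apply glue_succ_pushout.
Qed.

Lemma diag_glue_succ a (Ha : lt a top) (H : le a (osucc a)) :
  BaseChanges I (Glue a a) (Glue (osucc a) (osucc a)) (glue_map H H).
Proof.
  pose (Pa := attached_osucc Ha (le_refl (osucc a))).
  exists _, _, (comp (kw a) (sw_f (wit a))), (comp (inc a a) (sw_g (wit a))),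
    (att (osucc a) (osucc a) a Pa). split.
  - exact (proj1 (proj2 (wit_spec a Ha))).
  - rewrite <- (glue_map_comp H (le_refl a) (le_refl _) H H H).
    apply pushout_paste with (g1 := comp (inc (osucc a) a) (gw a)).
    + now apply glue_base_pushout.
    + pose proof (glue_succ_pushout (osucc a) a (le_refl _) H Pa) as Hpo.
      now rewrite xm_id, comp_id_l in Hpo.
Qed.

Lemma limit_factor_intro {l : W O} {F : W O -> Obj C} {D E : Obj C}
    (m : forall a, le a l -> Hom (F a) D) (u : forall a, lt a l -> Hom (F a) E) :
  (exists w, forall a Ha H, comp w (m a H) = u a Ha) ->
  (forall w1 w2 : Hom D E,
     (forall a (Ha : lt a l) (H : le a l), comp w1 (m a H) = comp w2 (m a H)) -> w1 = w2) ->
  exists w, (forall a Ha H, comp w (m a H) = u a Ha) /\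
    (forall w', (forall a Ha H, comp w' (m a H) = u a Ha) -> w' = w).
Proof.
  intros [w Hw] Hext. exists w. split; [exact Hw|].
  intros w' Hw'. apply Hext. intros a Ha H. now rewrite (Hw a Ha H), (Hw' a Ha H).
Qed.

Lemma top_glue_continuous l (Hl : IsLimit l) E (u : forall a, lt a l -> Hom (Glue top a) E) :
  (forall a a' (Ha : lt a l) (Ha' : lt a' l) (H : le a a'),
      comp (u a' Ha') (glue_map (le_refl top) H) = u a Ha) ->
  exists w, (forall a Ha (H : le a l), comp w (glue_map (le_refl top) H) = u a Ha) /\
    (forall w', (forall a Ha (H : le a l), comp w' (glue_map (le_refl top) H) = u a Ha) ->
       w' = w).
Proof.
  intro Hu. pose proof (bot_lt_limit Hl) as Hb0.
  pose (Pc := fun c (Hc : attached top l c) => attached_osucc (attached_lt_top Hc) (le_top _)).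
  apply (limit_factor_intro (F := fun a => Glue top a) (fun a H => glue_map (le_refl top) H) u).
  - assert (Hinc : forall a (Ha : lt a l),
               comp (u a Ha) (inc top a) = comp (u bot Hb0) (inc top bot)).
    { intros a Ha. now rewrite <- (Hu bot a Hb0 Ha (bot_le a)), <- comp_assoc, glue_map_inc_refl. }
    destruct (glue_intro top l E (comp (u bot Hb0) (inc top bot))
      (fun c Hc => comp (u (osucc c) (osucc_lt_limit Hl (proj1 Hc))) (att _ _ c (Pc c Hc))))
      as [w [Hw1 Hw2]].
    { intros c Hc. rewrite <- (Hinc (osucc c) (osucc_lt_limit Hl (proj1 Hc))).
      now rewrite <- !comp_assoc, (glue_cocone top (osucc c) c (Pc c Hc)). }
    exists w. intros a Ha H. apply glue_ext.
    + now rewrite <- comp_assoc, glue_map_inc_refl, Hw1, (Hinc a Ha).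
    + intros c Hc.
      rewrite <- comp_assoc, (glue_map_att _ _ c Hc (attached_mono (le_refl top) H Hc)), Hw2.
      now rewrite <- (Hu (osucc c) a _ Ha (osucc_le (proj1 Hc))), <- comp_assoc,
        (glue_map_att _ _ _ _ Hc).
  - intros w1 w2 Hw. apply glue_ext.
    + now rewrite <- (glue_map_inc_refl (le_refl top) (lt_le_incl Hb0)), !comp_assoc,
        (Hw bot Hb0).
    + intros c Hc. pose proof (osucc_lt_limit Hl (proj1 Hc)) as Hnc.
      rewrite <- (glue_map_att (le_refl top) (lt_le_incl Hnc) c (Pc c Hc) Hc).
      now rewrite !comp_assoc, (Hw _ Hnc).
Qed.

Lemma diag_glue_continuous l (Hl : IsLimit l) E (u : forall a, lt a l -> Hom (Glue a a) E) :
  (forall a a' (Ha : lt a l) (Ha' : lt a' l) (H : le a a'),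
      comp (u a' Ha') (glue_map H H) = u a Ha) ->
  exists w, (forall a Ha (H : le a l), comp w (glue_map H H) = u a Ha) /\
    (forall w', (forall a Ha (H : le a l), comp w' (glue_map H H) = u a Ha) -> w' = w).
Proof.
  intro Hu.
  pose (Pc := fun c (Hc : attached l l c) =>
                attached_osucc (attached_lt_top Hc) (le_refl (osucc c))).
  apply (limit_factor_intro (F := fun a => Glue a a) (fun a H => glue_map H H) u).
  - destruct (xm_cont ch Hl E (fun a Ha => comp (u a Ha) (inc a a))) as [w0 [Hw0 _]].
    { intros a a' Ha Ha' H. simpl.
      now rewrite <- comp_assoc, <- (glue_map_inc H H), comp_assoc, (Hu a a' Ha Ha' H). }
    destruct (glue_intro l l E w0
      (fun c Hc => comp (u (osucc c) (osucc_lt_limit Hl (proj1 Hc))) (att _ _ c (Pc c Hc))))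
      as [w [Hw1 Hw2]].
    { intros c Hc. rewrite comp_assoc, (Hw0 _ (osucc_lt_limit Hl (proj1 Hc))), <- !comp_assoc.
      f_equal. now rewrite <- (glue_cocone _ _ c (Pc c Hc) (le_refl _)), xm_id, comp_id_l. }
    exists w. intros a Ha H. apply glue_ext.
    + now rewrite <- comp_assoc, glue_map_inc, comp_assoc, Hw1, (Hw0 a Ha).
    + intros c Hc. rewrite <- comp_assoc, (glue_map_att H H c Hc (attached_mono H H Hc)), Hw2.
      now rewrite <- (Hu (osucc c) a _ Ha (osucc_le (proj1 Hc))), <- comp_assoc,
        (glue_map_att _ _ _ _ Hc).
  - intros w1 w2 Hw. apply glue_ext.
    + apply (xc_limit_ext Hl). intros a Ha.
      now rewrite <- !comp_assoc, <- (glue_map_inc (lt_le_incl Ha) (lt_le_incl Ha)),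
        !comp_assoc, (Hw a Ha).
    + intros c Hc. pose proof (osucc_lt_limit Hl (proj1 Hc)) as Hnc.
      rewrite <- (glue_map_att (lt_le_incl Hnc) (lt_le_incl Hnc) c (Pc c Hc) Hc).
      now rewrite !comp_assoc, (Hw _ Hnc).
Qed.

Definition top_glue_chain : Chain@{s o h} (BaseChanges I) O.
Proof.
  refine (@Build_Chain C (BaseChanges I) O (fun a => Glue top a)
            (fun a b H => glue_map (le_refl top) H) _ _ _ _ _).
  - intros; apply glue_map_irr.
  - intros; apply glue_map_id.
  - intros; apply glue_map_comp.
  - intros a n Hs H. pose proof (IsSucc_osucc Hs) as En. subst n.
    exact (top_glue_succ a (lt_le_trans (proj1 Hs) (le_top _)) H).
  - exact top_glue_continuous.
Defined.

Definition diag_glue_chain : Chain@{s o h} (BaseChanges I) O.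
Proof.
  refine (@Build_Chain C (BaseChanges I) O (fun a => Glue a a)
            (fun a b H => glue_map H H) _ _ _ _ _).
  - intros; apply glue_map_irr.
  - intros; apply glue_map_id.
  - intros; apply glue_map_comp.
  - intros a n Hs H. pose proof (IsSucc_osucc Hs) as En. subst n.
    exact (diag_glue_succ a (lt_le_trans (proj1 Hs) (le_top _)) H).
  - exact diag_glue_continuous.
Defined.

Lemma chain_composite_Phi_cof_reg :
  Phi (cof_reg@{s o h} I) (Xc bot) (Xc top) (xc (bot_le_top O)).
Proof.
  exists (Glue top top), (inc top top). split.
  - destruct (Glue_bot top) as [e He]. exists O, top_glue_chain, (eq_sym e), eq_refl. simpl.
    now rewrite castHom_sym, <- He, glue_map_inc_refl.
  - destruct (Glue_bot bot) as [e He]. exists O, diag_glue_chain, (eq_sym e), eq_refl. simpl.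
    now rewrite castHom_sym, <- He, glue_map_inc.
Qed.

End Construction.

Unset Universe Polymorphism.

Theorem lemma4p3@{s o h} (C : Category@{o h}) (HC : Cocomplete@{s o h} C)
    (I : MorClass C) (A B : Obj C) (f : Hom A B) :
  cof_reg@{s o h} (Phi I) A B f -> Phi (cof_reg@{s o h} I) A B f.
Proof.
  intros [O [ch [e0 [e1 Hf]]]]. subst A B f. simpl.
  exact (chain_composite_Phi_cof_reg C HC I O ch).
Qed.
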